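(* Consider a Boolean control network $\mathbf{x}(t+1)=L\ltimes\mathbf{u}(t)\ltimes\mathbf{x}(t)$, $\mathbf{y}(t)=H\mathbf{x}(t)$, with $L\in\mathcal{L}_{N\times NM}$, $H\in\mathcal{L}_{P\times N}$, a periodic reference output trajectory of minimal period $T\ge1$, $\mathbf{y}_r(s+kT)=\delta_P^{i_s}$ ($s\in[1,T]$, $k\in\mathbb{Z}_+$), and an initial state $\mathbf{x}_0\in\mathcal{L}_N$ from which the periodic trajectory is trackable (i.e. there exists $\{\mathbf{u}(t)\}_{t\in\mathbb{Z}_+}\subset\mathcal{L}_M$ such that the state trajectory with $\mathbf{x}(0)=\mathbf{x}_0$ satisfies $H\mathbf{x}(t)=\mathbf{y}_r(t)$ for all $t\ge1$). Let $\mathbf{v}(t)=H^\top\mathbf{y}_r(t)$ for $t\in[1,T+1]$, $L_{tot}=L_1\vee\cdots\vee L_M$, $\boldsymbol{\alpha}(1)=\mathbf{v}(1)$, $\boldsymbol{\alpha}(t)=\mathbf{v}(t)\odot(L_{tot}\boldsymbol{\alpha}(t-1))$ for $t\in[2,T+1]$; $\boldsymbol{\beta}_1(T+1)=\boldsymbol{\alpha}(T+1)$, $\boldsymbol{\beta}_1(t)=\boldsymbol{\alpha}(t)\odot(L_{tot}^\top\boldsymbol{\beta}_1(t+1))$ for $t=T,\dots,1$; for $k\ge2$, $\boldsymbol{\beta}_k(T+1)=\boldsymbol{\beta}_{k-1}(T+1)\odot\boldsymbol{\beta}_{k-1}(1)$ and $\boldsymbol{\beta}_k(t)=\boldsymbol{\beta}_{k-1}(t)\odot(L_{tot}^\top\boldsymbol{\beta}_k(t+1))$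 for $t=T,\dots,1$. Let $\mathcal{X}_t^{(k)}=\{\delta_N^j:[\boldsymbol{\beta}_k(t)]_j\neq0\}$ and let $k^*$ be the smallest $k\ge1$ with $\mathcal{X}_{T+1}^{(k)}\subseteq\mathcal{X}_1^{(k)}$ or $\mathcal{X}_1^{(k)}=\emptyset$; write $\boldsymbol{\beta}=\boldsymbol{\beta}_{k^*}$. Define $$\mathcal{T}_{xu}(0)=\{(\delta_N^j,\delta_M^i):(L\ltimes\delta_M^i\ltimes\delta_N^j)\odot\boldsymbol{\beta}(1)\neq\mathbf{0}_N\},$$ $$\mathcal{T}_{xu}(t)=\{(\delta_N^j,\delta_M^i):[\boldsymbol{\beta}(t)]_j\neq0\text{ and }(L\ltimes\delta_M^i\ltimes\delta_N^j)\odot\boldsymbol{\beta}(t+1)\neq\mathbf{0}_N\},\quad t\in[1,T-1],$$ and $\mathcal{T}_u(t,\mathbf{x})=\{\mathbf{u}\in\mathcal{L}_M:(\mathbf{x},\mathbf{u})\in\mathcal{T}_{xu}(t)\}$. Then an input sequence $\{\mathbf{u}(t)\}_{t\in\mathbb{Z}_+}$ ensuring tracking of the periodic trajectory from $\mathbf{x}_0$ is obtained by the recursive procedure: for $t=0,1,2,\dots$, choose $\mathbf{u}_t\in\mathcal{T}_u(t\bmod T,\mathbf{x}_t)$ and set $\mathbf{x}_{t+1}=L\ltimes\mathbf{u}_t\ltimes\mathbf{x}_t$, with $\mathbf{u}(t)=\mathbf{u}_t$.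
   Context: $\delta_k^i$ is the $i$-th canonical vector of $\mathbb{R}^k$; $\mathcal{L}_k$ is the set of canonical vectors of $\mathbb{R}^k$; $\mathcal{L}_{k\times q}$ the set of $k\times q$ matrices whose columns lie in $\mathcal{L}_k$. $N=2^n$, $M=2^m$, $P=2^p$. $L=[L_1|\cdots|L_M]$ with $L_i\in\mathcal{L}_{N\times N}$, and $L\ltimes\delta_M^i\ltimes\mathbf{x}=L_i\mathbf{x}$. $\vee$ is entrywise Boolean OR, $\odot$ is the entrywise (Hadamard) product, matrix–vector products are ordinary (only zero/nonzero patterns matter), $[\mathbf{w}]_j$ is the $j$-th entry, $\mathbf{0}_N$ the zero vector, and $t\bmod T$ is the remainder of the Euclidean division of $t$ by $T$. *)

From mathcomp Require Import all_boot.
Set Implicit Arguments.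
Unset Strict Implicit.
Unset Printing Implicit Defensive.

(* Encoding:
   - a canonical vector delta_K^j is represented by its index j : 'I_K;
   - a logical matrix L in L_{N x NM}, L = [L_1|...|L_M], is represented by
     L : 'I_M -> 'I_N -> 'I_N with  L ⋉ delta_M^i ⋉ delta_N^j = delta_N^(L i j);
   - H in L_{P x N} is represented by H : 'I_N -> 'I_P, H delta_N^j = delta_P^(H j);
   - a nonnegative vector w in R^N (only its zero pattern matters) is
     represented by its support {set 'I_N}:  j \in w  <->  [w]_j <> 0. *)

Section BCN.
Variables (N M P : nat) (L : 'I_M -> 'I_N -> 'I_N) (H : 'I_N -> 'I_P).

Fixpoint traj (u : nat -> 'I_M) (x0 : 'I_N) (t : nat) : 'I_N :=
  match t with
  | 0 => x0
  | t'.+1 => L (u t') (traj u x0 t')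
  end.

Definition Ltot_mul (w : {set 'I_N}) : {set 'I_N} :=
  [set y : 'I_N | [exists i : 'I_M, [exists j in w, L i j == y]]].

Definition LtotT_mul (w : {set 'I_N}) : {set 'I_N} :=
  [set j : 'I_N | [exists i : 'I_M, L i j \in w]].

Section Ref.
Variables (T : nat) (yr : nat -> 'I_P).

Definition vv (t : nat) : {set 'I_N} := [set j : 'I_N | H j == yr t].

Fixpoint alpha (t : nat) : {set 'I_N} :=
  match t with
  | 0 => set0 (* unused *)
  | 1 => vv 1
  | t'.+1 => vv t :&: Ltot_mul (alpha t')
  end.

(* backward recursion: value at time T+1-d, given top = value at T+1,
   b(t) = base(t) ⊙ (L_tot^T b(t+1)) *)
Fixpoint back (top : {set 'I_N}) (base : nat -> {set 'I_N}) (d : nat)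
  : {set 'I_N} :=
  match d with
  | 0 => top
  | d'.+1 => base (T - d') :&: LtotT_mul (back top base d')
  end.

(* beta k t (meaningful for k >= 1 and t in [1, T+1]) *)
Fixpoint beta (k : nat) : nat -> {set 'I_N} :=
  match k with
  | 0 => alpha (* unused *)
  | 1 => fun t => back (alpha T.+1) alpha (T.+1 - t)
  | k'.+1 => let b := beta k' in
             fun t => back (b T.+1 :&: b 1) b (T.+1 - t)
  end.

Definition stop_cond (k : nat) : bool :=
  (beta k T.+1 \subset beta k 1) || (beta k 1 == set0).

Definition is_kstar (k : nat) : Prop :=
  0 < k /\ stop_cond k /\ (forall k', 0 < k' < k -> ~~ stop_cond k').

Definition Tu (ks : nat) (t : nat) (x : 'I_N) : {set 'I_M} :=
  [set i : 'I_M |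
     if t == 0 then L i x \in beta ks 1
     else (x \in beta ks t) && (L i x \in beta ks t.+1)].

End Ref.
End BCN.

From mathcomp Require Import all_boot zify.
Set Implicit Arguments.
Unset Strict Implicit.
Unset Printing Implicit Defensive.

(* Let x be the state trajectory of an input sequence along which x0 tracks
   y_r. Then x(jT + t) lies in alpha(t), since alpha(t) is the set of states
   consistent with the outputs y_r(1), ..., y_r(t); and it lies in every
   beta_k(t), since each backward pass only discards states without a
   successor in the next set, and x(jT + T + 1) = x((j+1)T + 1). So beta(1) is
   nonempty, and the stopping rule yields beta(T+1) ⊆ beta(1). Together with
   beta(t) ⊆ L_tot^T beta(t+1) for t ∈ [1, T], the sets beta(1), ..., beta(T)
   form a cycle in which every state has an input leading into the next set;
   these are the inputs collected by T_u, and as beta(t) ⊆ v(t) the resulting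
   trajectory tracks y_r. The index k* exists because beta_k(T+1) strictly
   shrinks as long as the stopping rule fails. *)

Section Beta.
Variables (N M P : nat) (L : 'I_M -> 'I_N -> 'I_N) (H : 'I_N -> 'I_P).
Variables (T : nat) (yr : nat -> 'I_P).

Local Notation vv := (vv H yr).
Local Notation alpha := (alpha L H yr).
Local Notation beta := (beta L H T yr).
Local Notation back := (back L T).
Local Notation LtotT := (LtotT_mul L).
Local Notation stop_cond := (stop_cond L H T yr).

Lemma mem_Ltot (w : {set 'I_N}) i j : j \in w -> L i j \in Ltot_mul L w.
Proof.
move=> wj; rewrite inE; apply/existsP; exists i.
by apply/existsP; exists j; rewrite wj /=.
Qed.

Lemma mem_LtotT (w : {set 'I_N}) i j : L i j \in w -> j \in LtotT w.
Proof. by move=> w_ij; rewrite inE; apply/existsP; exists i. Qed.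

Definition beta_top k :=
  if k is k'.+2 then beta k'.+1 T.+1 :&: beta k'.+1 1 else alpha T.+1.

Definition beta_base k := if k is k'.+2 then beta k'.+1 else alpha.

Lemma betaE k t : 0 < k -> beta k t = back (beta_top k) (beta_base k) (T.+1 - t).
Proof. by case: k => [|[|k]]. Qed.

Lemma beta_T1 k : 0 < k -> beta k T.+1 = beta_top k.
Proof. by move=> k_pos; rewrite betaE // subnn. Qed.

Lemma beta_rec k t : 0 < k -> 0 < t <= T ->
  beta k t = beta_base k t :&: LtotT (beta k t.+1).
Proof.
by move=> k_pos /andP[t_pos le_tT]; rewrite !betaE // subSS subSn //= subKn.
Qed.

Lemma alpha_sub_vv t : 0 < t -> alpha t \subset vv t.
Proof. by case: t => [|[|t]] // _; rewrite ?subxx ?subsetIl. Qed.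

Lemma beta_sub_vv k t : 0 < k -> 0 < t <= T -> beta k t \subset vv t.
Proof.
move=> + tT; elim: k => [|k IH] // _.
rewrite beta_rec //; apply: subset_trans (subsetIl _ _) _.
by case: k IH => [|k] IH; [apply: alpha_sub_vv; case/andP: tT | exact: IH].
Qed.

Lemma beta_sub_LtotT k t : 0 < k -> 0 < t <= T ->
  beta k t \subset LtotT (beta k t.+1).
Proof. by move=> k_pos tT; rewrite beta_rec // subsetIr. Qed.

Lemma beta_T1_proper k : 0 < k -> ~~ stop_cond k ->
  beta k.+1 T.+1 \proper beta k T.+1.
Proof.
case: k => // k _; rewrite /stop_cond negb_or => /andP[not_sub _].
by rewrite beta_T1 //= properE subsetIl subsetI subxx.
Qed.

Lemma stop_cond_after k : 0 < k -> exists2 k', k <= k' & stop_cond k'.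
Proof.
have [c] := ubnP #|beta k T.+1|; elim: c k => // c IH k lt_c k_pos.
have [stop | nstop] := boolP (stop_cond k); first by exists k.
have [|k' le_k k'_stop] := IH k.+1 _ isT.
  exact: leq_trans (proper_card (beta_T1_proper k_pos nstop)) lt_c.
by exists k' => //; apply: ltnW.
Qed.

Lemma kstar_exists : exists ks, is_kstar L H T yr ks.
Proof.
have /ex_minnP[k /andP[k_pos k_stop] k_min] : exists k, (0 < k) && stop_cond k.
  by have [k k_pos k_stop] := stop_cond_after (ltn0Sn 0); exists k; rewrite k_pos.
exists k; split=> //; split=> // k' /andP[k'_pos lt_k'k]; apply/negP => k'_stop.
by have := k_min k'; rewrite k'_pos k'_stop leqNgt lt_k'k => /(_ isT).
Qed.

Hypothesis yr_periodic : forall t, 0 < t -> yr (t + T) = yr t.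

Lemma yr_mulT_add j t : 0 < t -> yr (j * T + t) = yr t.
Proof.
move=> t_pos; elim: j => [|j IH]; first by rewrite mul0n add0n.
have -> : j.+1 * T + t = j * T + t + T by rewrite mulSn; lia.
by rewrite yr_periodic ?IH // ltn_addl.
Qed.

Lemma yr_modS s : yr (s %% T).+1 = yr s.+1.
Proof. by rewrite {2}(divn_eq s T) -addnS yr_mulT_add. Qed.

Section Trajectory.
Variables (u : nat -> 'I_M) (x0 : 'I_N).
Local Notation xs := (traj L u x0).

Lemma traj_mem_back (top : {set 'I_N}) (base : nat -> {set 'I_N}) o :
  xs (o + T.+1) \in top ->
  (forall t, 0 < t <= T -> xs (o + t) \in base t) ->
  forall t, 0 < t <= T.+1 -> xs (o + t) \in back top base (T.+1 - t).
Proof.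
move=> x_top x_base t /andP[t_pos le_tT1].
move Ed: (T.+1 - t) => d; elim: d t Ed t_pos le_tT1 => [|d IH] t Ed t_pos le_tT1.
  by rewrite (_ : t = T.+1) //; lia.
rewrite /= inE (_ : T - d = t); last by lia.
rewrite x_base; last by lia.
apply: (@mem_LtotT _ (u (o + t))).
have -> : L (u (o + t)) (xs (o + t)) = xs (o + t.+1) by rewrite addnS.
apply: IH; lia.
Qed.

Hypothesis tracking : forall t, 0 < t -> H (xs t) = yr t.

Lemma traj_in_vv j t : 0 < t -> xs (j * T + t) \in vv t.
Proof. by move=> t_pos; rewrite inE tracking ?yr_mulT_add //; lia. Qed.

Lemma traj_in_alpha j t : 0 < t -> xs (j * T + t) \in alpha t.
Proof.
case: t => [|t] // _; elim: t => [|t IH]; first exact: traj_in_vv.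
by rewrite [alpha _]/= inE traj_in_vv // addnS mem_Ltot.
Qed.

Lemma traj_in_beta k j t : 0 < k -> 0 < t <= T.+1 -> xs (j * T + t) \in beta k t.
Proof.
case: k => [|k] // _; elim: k j t => [|k IH] j t tT;
  rewrite betaE //; apply: traj_mem_back tT.
- exact: traj_in_alpha.
- by move=> s /andP[s_pos _]; apply: traj_in_alpha.
- rewrite inE IH; last by lia.
  by rewrite (_ : j * T + T.+1 = j.+1 * T + 1) ?IH // mulSn; lia.
- by move=> s sT; apply: IH; lia.
Qed.

End Trajectory.

Section Procedure.
Variable k : nat.
Hypothesis k_pos : 0 < k.
Hypothesis beta_T1_sub : beta k T.+1 \subset beta k 1.

Local Notation Tu := (Tu L H T yr k).

Lemma mem_Tu_step t x i : i \in Tu t x -> L i x \in beta k t.+1.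
Proof. by rewrite inE; case: eqP => [->|_] // /andP[]. Qed.

Lemma Tu_nonempty r x : r < T -> x \in beta k r.+1 ->
  exists i, i \in Tu (r.+1 %% T) x.
Proof.
move=> lt_rT x_in.
have : x \in LtotT (beta k r.+2) by apply: (subsetP (beta_sub_LtotT _ _)).
rewrite inE => /existsP[i x_to].
exists i; rewrite inE; have [lt_r1T | le_Tr1] := ltnP r.+1 T.
  by rewrite modn_small //= x_in.
rewrite (_ : r.+1 = T) ?modnn /=; last by lia.
by apply: (subsetP beta_T1_sub); rewrite (_ : T.+1 = r.+2) //; lia.
Qed.

Hypothesis T_pos : 0 < T.
Variable x0 : 'I_N.
Hypothesis x0_start : exists i, L i x0 \in beta k 1.

Lemma Tu_never_stuck u t :
  (forall s, s < t -> u s \in Tu (s %% T) (traj L u x0 s)) ->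
  exists i, i \in Tu (t %% T) (traj L u x0 t).
Proof.
case: t => [|s] Tu_u.
  by have [i i_start] := x0_start; exists i; rewrite mod0n inE.
rewrite (_ : s.+1 %% T = (s %% T).+1 %% T); last by rewrite -addn1 -modnDml addn1.
apply: Tu_nonempty; first by rewrite ltn_pmod.
exact: (mem_Tu_step (Tu_u s (ltnSn s))).
Qed.

Lemma Tu_tracks u :
  (forall t, u t \in Tu (t %% T) (traj L u x0 t)) ->
  forall t, 0 < t -> H (traj L u x0 t) = yr t.
Proof.
move=> Tu_u [|s] // _; rewrite -yr_modS.
have /(subsetP (beta_sub_vv _ _)) := mem_Tu_step (Tu_u s).
by rewrite inE ltn_pmod // => /(_ k_pos isT) /eqP.
Qed.

End Procedure.
End Beta.

Theorem corollary2 (n m p : nat)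
  (L : 'I_(2 ^ m) -> 'I_(2 ^ n) -> 'I_(2 ^ n))
  (H : 'I_(2 ^ n) -> 'I_(2 ^ p))
  (T : nat) (yr : nat -> 'I_(2 ^ p)) (x0 : 'I_(2 ^ n)) :
  (* periodic reference output of minimal period T >= 1 (indexed t >= 1) *)
  0 < T ->
  (forall t, 0 < t -> yr (t + T) = yr t) ->
  (forall T', 0 < T' < T -> ~ (forall t, 0 < t -> yr (t + T') = yr t)) ->
  (* trackability from x0 *)
  (exists u : nat -> 'I_(2 ^ m),
      forall t, 0 < t -> H (traj L u x0 t) = yr t) ->
  (* k* exists, and for it the recursive procedure never gets stuck and
     every input sequence it produces ensures tracking *)
  (exists ks, is_kstar L H T yr ks) /\
  (forall ks, is_kstar L H T yr ks ->
     (forall (u : nat -> 'I_(2 ^ m)) (t : nat),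
        (forall s, s < t -> u s \in Tu L H T yr ks (s %% T) (traj L u x0 s)) ->
        exists i, i \in Tu L H T yr ks (t %% T) (traj L u x0 t)) /\
     (forall u : nat -> 'I_(2 ^ m),
        (forall t, u t \in Tu L H T yr ks (t %% T) (traj L u x0 t)) ->
        forall t, 0 < t -> H (traj L u x0 t) = yr t)).
Proof.
move=> T_pos yr_periodic _ [us us_tracks]; split; first exact: kstar_exists.
move=> ks [ks_pos [ks_stop _]].
have x1_in : traj L us x0 1 \in beta L H T yr ks 1.
  by have := traj_in_beta yr_periodic us_tracks 0 ks_pos (isT : 0 < 1 <= T.+1).
have top_sub : beta L H T yr ks T.+1 \subset beta L H T yr ks 1.
  by case/orP: ks_stop => // /eqP beta1_empty; rewrite beta1_empty in_set0 in x1_in.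
have x0_start : exists i, L i x0 \in beta L H T yr ks 1 by exists (us 0).
split; [exact: Tu_never_stuck | exact: Tu_tracks].
Qed.
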